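(* For each $1\le n\le\omega$: (1) $X_n^{\mathrm{inj}}$ is a comeager subset of $X_n$ and is invariant under the action $a_n$; (2) the orbit equivalence relation of $a_n$ restricted to $X_n^{\mathrm{inj}}$ equals $F_n\restriction X_n^{\mathrm{inj}}$.
   Context: Let $\mathbb N=\{0,1,2,\dots\}$ and identify $2^{\mathbb N}$ with $\mathcal P(\mathbb N)$. For $1\le m\le\omega$ and $x\in((2^{\mathbb N})^{\mathbb N})^m$ define recursively: $A^x_1=\{x(0)(k):k\in\mathbb N\}\subseteq 2^{\mathbb N}$; for $1\le j<m$ and $l\in\mathbb N$, $a^{x,l}_1=\{x(0)(k):x(1)(l)(k)=1\}$ and $a^{x,l}_{j}=\{a^{x,k}_{j-1}:x(j)(l)(k)=1\}$ for $j\ge 2$; and $A^x_{j+1}=\{a^{x,k}_j:k\in\mathbb N\}$ for $1\le j<m$. Let $X_1=(2^{\mathbb N})^{\mathbb N}$, and for $2\le n\le\omega$ let $X_n$ be the set of $x\in((2^{\mathbb N})^{\mathbb N})^n$ such that for every $1\le i<n$: (1) for every $m$ there is $k$ with $x(i)(k)(m)=1$; (2) for every $k$ there is $m$ with $x(i)(k)(m)=1$; (3) for all $k,l_1,l_2$, if $x(i-1)(l_1)=x(i-1)(l_2)$ then $x(i)(k)(l_1)=x(i)(k)(l_2)$. For $1\le n<\omega$, $F_n$ on $X_n$ is $x\mathrel{F_n}y\iff A^x_n=A^y_n$; $F_\omega$ on $X_\omega$ is $x\mathrel{F_\omega}y\iff A^x_j=A^y_j$ for all $1\le j<\omega$. Actions: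 $S_\infty$ is the group of permutations of $\mathbb N$. For $g\in S_\infty$ and $z\in(2^{\mathbb N})^{\mathbb N}$ let $(g\cdot_a z)(m)=z(g^{-1}(m))$. For $(g,h)\in S_\infty\times S_\infty$ and $z\in(2^{\mathbb N})^{\mathbb N}$ let $((g,h)\cdot_c z)(m)(j)=z(h^{-1}(m))(g^{-1}(j))$. The action $a_n$ of $(S_\infty)^n$ on $((2^{\mathbb N})^{\mathbb N})^n$ is $(g\cdot_{a_n}x)(0)=g(0)\cdot_a x(0)$ and $(g\cdot_{a_n}x)(k+1)=(g(k),g(k+1))\cdot_c x(k+1)$ for $k+1<n$. $X_n^{\mathrm{inj}}$ is the set of $x\in X_n$ such that $k\mapsto x(0)(k)$ is injective and, for each $1\le k<n$, $l\mapsto a^{x,l}_k$ is injective. *)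

From HB Require Import structures.
From mathcomp Require Import all_boot.
From mathcomp Require Import boolp classical_sets functions.
Set Implicit Arguments. Unset Strict Implicit. Unset Printing Implicit Defensive.
Local Open Scope classical_set_scope.

Inductive enat := Fin of nat | Omega.

Definition ltn_e (i : nat) (n : enat) : bool :=
  match n with Fin m => (i < m)%N | Omega => true end.

Definition one_le (n : enat) : Prop :=
  match n with Fin m => (1 <= m)%N | Omega => True end.

(** Index set {i : i < n} and the space ((2^N)^N)^n, a point x being
    read as x(i)(k)(m) = x i k m. *)
Definition Idx (n : enat) := {i : nat | ltn_e i n}.
Definition Y (n : enat) := Idx n -> nat -> nat -> bool.

(** Extension by a default value outside the index set (only used at valid
    indices in what follows). *)
Definition ext (n : enat) (x : Y n) (i : nat) : nat -> nat -> bool :=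
  match (insub i : option (Idx n)) with
  | Some ii => x ii
  | None => fun _ _ => false
  end.

(** Product topology on ((2^N)^N)^n (2 = {0,1} discrete): U is open iff
    membership of each point is witnessed by finitely many coordinates. *)
Definition popen (n : enat) (U : set (Y n)) : Prop :=
  forall x, U x -> exists N : nat, forall y : Y n,
    (forall (i : Idx n) k m, (val i < N)%N -> (k < N)%N -> (m < N)%N ->
       y i k m = x i k m) -> U y.

Definition rel_open (n : enat) (X U : set (Y n)) : Prop :=
  exists V, popen V /\ U = V `&` X.

Definition rel_closure (n : enat) (X B : set (Y n)) : set (Y n) :=
  [set x | X x /\ forall V, popen V -> V x -> exists y, [/\ X y, B y & V y]].

Definition nowhere_dense_in (n : enat) (X B : set (Y n)) : Prop :=
  forall U, rel_open X U -> U `<=` rel_closure X B -> U = set0.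

Definition meager_in (n : enat) (X M : set (Y n)) : Prop :=
  exists F : nat -> set (Y n),
    (forall k, nowhere_dense_in X (F k)) /\ M `<=` \bigcup_k F k.

Definition comeager_in (n : enat) (X A : set (Y n)) : Prop :=
  A `<=` X /\ meager_in X (X `\` A).

Definition Xn (n : enat) : set (Y n) :=
  [set x | forall i : nat, (1 <= i)%N -> ltn_e i n ->
     [/\ (forall m, exists k, ext x i k m = true),
         (forall k, exists m, ext x i k m = true) &
         (forall k l1 l2, ext x i.-1 l1 = ext x i.-1 l2 ->
            ext x i k l1 = ext x i k l2)]].

Fixpoint Ty (j : nat) : Type :=
  match j with 0 => nat -> bool | S j' => set (Ty j') end.

(** elt x j l = a^{x,l}_j for j >= 1, and elt x 0 l = x(0)(l). *)
Fixpoint elt (n : enat) (x : Y n) (j : nat) : nat -> Ty j :=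
  match j return nat -> Ty j with
  | 0 => fun l => ext x 0 l
  | S j' => fun l => [set elt x j' k | k in [set k | ext x (S j') l k = true]]
  end.

(** Aset x j = A^x_{j+1}. *)
Arguments elt {n} x j.
Definition Aset (n : enat) (x : Y n) (j : nat) : set (Ty j) := range (elt x j).
Arguments Aset {n} x j.

Definition Frel (n : enat) (x y : Y n) : Prop :=
  match n with
  | Fin m => Aset x m.-1 = Aset y m.-1
  | Omega => forall j, Aset x j = Aset y j
  end.

Definition Xinj (n : enat) : set (Y n) :=
  [set x | Xn x /\ forall k, ltn_e k n -> injective (elt x k)].

Record sinf := Sinf {
  pf : nat -> nat; pinv : nat -> nat;
  pfK : cancel pf pinv; pinvK : cancel pinv pf }.

Definition sinf_id : sinf := @Sinf id id (fun _ => erefl) (fun _ => erefl).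

Definition gext (n : enat) (g : Idx n -> sinf) (i : nat) : sinf :=
  match (insub i : option (Idx n)) with Some ii => g ii | None => sinf_id end.

Definition act (n : enat) (g : Idx n -> sinf) (x : Y n) : Y n :=
  fun i m j =>
    match val i with
    | 0 => x i (pinv (gext g 0) m) j
    | S k => x i (pinv (gext g (S k)) m) (pinv (gext g k) j)
    end.

Arguments Xn : clear implicits.
Arguments Xinj : clear implicits.

From Pilot Require Import Defs.
From mathcomp Require Import all_boot.
From mathcomp Require Import boolp classical_sets functions.
From mathcomp Require Import zify.
Local Open Scope classical_set_scope.
Set Implicit Arguments. Unset Strict Implicit.

(* The action permutes the rows of level i by g(i) and its columns by g(i-1),
   i.e. it re-enumerates the sets a^{x,l}_i without changing them; hence it
   preserves X_n, X_n^inj and every A^x_j.  Conversely, condition (1) makes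
   A^x_j the union of A^x_{j+1}, so F_n forces A^x_j = A^y_j at every level,
   and on X_n^inj two injective enumerations of the same set differ by a
   unique permutation; these permutations assemble into a g with g.x = y.
   Finally, injectivity propagates upwards level by level, so a point of
   X_n outside X_n^inj has two equal distinct rows at some level.  Each such
   collision set is relatively closed in X_n and misses a point of X_n in
   every basic open set: fill in all coordinates outside a finite box with a
   pattern whose rows are pairwise distinct. *)

Lemma perm_of_range_eq T (a b : nat -> T) : injective a -> injective b -> range a = range b ->
  exists s : sinf, forall l, b (pf s l) = a l.
Proof.
move=> inja injb ab.
have a_in_b l : exists k, b k = a l.
  have [k _ <-] : range b (a l) by rewrite -ab; exists l.
  by exists k.
have b_in_a k : exists l, a l = b k.
  have [l _ <-] : range a (b k) by rewrite ab; exists k.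
  by exists l.
have [f bf] := choice a_in_b; have [h ah] := choice b_in_a.
have fK : cancel f h by move=> l; apply: inja; rewrite ah bf.
have hK : cancel h f by move=> k; apply: injb; rewrite bf ah.
by exists (Sinf fK hK).
Qed.

Lemma range_comp_pinv T (f : nat -> T) (s : sinf) : range (f \o Defs.pinv s) = range f.
Proof.
apply/seteqP; split=> _ [k _ <-]; first by exists (Defs.pinv s k).
by exists (pf s k); rewrite //= pfK.
Qed.

Section Levels.
Variable n : enat.

Lemma ltn_e_le i j : (j <= i)%N -> ltn_e i n -> ltn_e j n.
Proof. by case: n => //= m ji; apply: leq_ltn_trans. Qed.

Lemma extE (x : Y n) i (Hi : ltn_e i n) : ext x i = x (exist _ i Hi).
Proof. by rewrite /ext insubT. Qed.

Lemma gextE (g : Idx n -> sinf) i (Hi : ltn_e i n) : gext g i = g (exist _ i Hi).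
Proof. by rewrite /gext insubT. Qed.

Lemma mem_elt_succ (x : Y n) j l k : injective (elt x j) ->
  elt x j.+1 l (elt x j k) <-> ext x j.+1 l k.
Proof. by move=> inj; split=> [[k' xk' /inj <-]|xk]; last exists k. Qed.

Lemma ext_succ_transport (x y : Y n) j k k' m m' :
  injective (elt x j) -> injective (elt y j) ->
  elt y j.+1 k = elt x j.+1 k' -> elt y j m = elt x j m' ->
  ext y j.+1 k m = ext x j.+1 k' m'.
Proof.
move=> injx injy Ek Em; apply/idP/idP.
  by move/(mem_elt_succ k m injy); rewrite Ek Em => /(mem_elt_succ k' m' injx).
by move/(mem_elt_succ k' m' injx); rewrite -Ek -Em => /(mem_elt_succ k m injy).
Qed.

Lemma Aset_bigcup (x : Y n) j : Xn n x -> ltn_e j.+1 n ->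
  Aset x j = \bigcup_(S in Aset x j.+1) S.
Proof.
move=> Xx Hj; have [cols _ _] := Xx j.+1 isT Hj.
apply/seteqP; split=> t.
  by case=> k _ <-; have [l xl] := cols k; exists (elt x j.+1 l); [exists l | exists k].
by case=> S [l _ <-] [k _ <-]; exists k.
Qed.

End Levels.

Section Action.
Variables (n : enat) (g : Idx n -> sinf).

Definition colperm i : sinf := if i is j.+1 then gext g j else sinf_id.

Lemma ext_act (x : Y n) i k m : ltn_e i n ->
  ext (act g x) i k m = ext x i (Defs.pinv (gext g i) k) (Defs.pinv (colperm i) m).
Proof. by move=> Hi; rewrite !(extE _ Hi) /act /=; case: i Hi. Qed.

Lemma elt_act (x : Y n) j : ltn_e j n -> elt (act g x) j = elt x j \o Defs.pinv (gext g j).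
Proof.
elim: j => [|j IH] Hj; first by apply/funext => l; apply/funext => m /=; rewrite ext_act.
rewrite /= (IH (ltn_e_le (leqnSn j) Hj)); apply/funext => l /=.
apply/seteqP; split=> _ [k xk <-].
  by exists (Defs.pinv (gext g j) k); rewrite //= -ext_act.
by exists (pf (gext g j) k); rewrite /= ?ext_act //= pfK.
Qed.

Lemma Aset_act (x : Y n) j : ltn_e j n -> Aset (act g x) j = Aset x j.
Proof. by move=> Hj; rewrite /Aset elt_act // range_comp_pinv. Qed.

Lemma Xn_act (x : Y n) : Xn n x -> Xn n (act g x).
Proof.
move=> Xx i i_ge1 Hi; have [cols rows coh] := Xx i i_ge1 Hi.
have Hi' : ltn_e i.-1 n by apply: ltn_e_le Hi; apply: leq_pred.
split.
- move=> m; have [k xk] := cols (Defs.pinv (colperm i) m).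
  by exists (pf (gext g i) k); rewrite ext_act // pfK.
- move=> k; have [m xm] := rows (Defs.pinv (gext g i) k).
  by exists (pf (colperm i) m); rewrite ext_act // pfK.
- move=> k l1 l2 E; rewrite !ext_act //.
  clear cols rows; case: i i_ge1 Hi Hi' coh E => // j _ Hi Hj coh E; apply: coh.
  apply/funext => m; have := congr1 (fun r => r (pf (colperm j) m)) E.
  by rewrite /= !ext_act // pfK.
Qed.

Lemma Xinj_act (x : Y n) : Xinj n x -> Xinj n (act g x).
Proof.
move=> [Xx injx]; split; first exact: Xn_act.
move=> k Hk; rewrite elt_act // => a b /(injx k Hk); exact: (can_inj (Defs.pinvK _)).
Qed.

Lemma act_eq_of_elt (x y : Y n) :
  (forall j, ltn_e j n -> injective (elt x j)) ->
  (forall j, ltn_e j n -> injective (elt y j)) ->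
  (forall (i : Idx n) l, elt y (val i) (pf (g i) l) = elt x (val i) l) ->
  act g x = y.
Proof.
move=> injx injy gxy.
have yx j (Hj : ltn_e j n) k : elt y j k = elt x j (Defs.pinv (gext g j) k).
  rewrite (gextE _ Hj).
  by have := gxy (exist _ j Hj) (Defs.pinv (g (exist _ j Hj)) k); rewrite /= Defs.pinvK.
apply/funext => -[i Hi]; apply/funext => k; apply/funext => m.
rewrite -(extE (act g x) Hi) -(extE y Hi) ext_act //.
case: i Hi => [|j] Hi; first by have /= -> := yx 0%N Hi k.
have Hj : ltn_e j n by apply: ltn_e_le Hi.
by symmetry; apply: ext_succ_transport; [exact: injx | exact: injy | exact: yx | exact: yx].
Qed.

End Action.

Section Comeager.
Variable n : enat.

(* Outside the columns [0, N), row k < N has its ones at N + 2k and N + 2k + 1,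
   and row k >= N its single one at k; so rows are told apart by their tails,
   and rows >= N additionally have ones in every column m < N. *)
Definition tail_pattern N k m :=
  if (k < N)%N then (m == N + 2 * k)%N || (m == N + 2 * k + 1)%N
  else (m < N)%N || (m == k).

Lemma tail_pattern_inj_lt N k l : (k < N)%N ->
  (forall m, (N <= m)%N -> tail_pattern N k m = tail_pattern N l m) -> k = l.
Proof.
move=> kN E; have := E (N + 2 * k)%N (leq_addr _ _).
have := E (N + 2 * k + 1)%N ltac:(lia).
rewrite /tail_pattern kN !eqxx orbT; case: ifP => _.
  by move=> /esym/orP[] ? /esym/orP[] ?; lia.
by move=> /esym/orP[] ? /esym/orP[] ?; lia.
Qed.

Lemma tail_pattern_inj N k l :
  (forall m, (N <= m)%N -> tail_pattern N k m = tail_pattern N l m) -> k = l.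
Proof.
move=> E; have [kN|Nk] := ltnP k N; first exact: tail_pattern_inj_lt E.
have [lN|Nl] := ltnP l N; first by apply/esym/(tail_pattern_inj_lt lN) => m /E.
by have := E k Nk; rewrite /tail_pattern !ltnNge Nk Nl eqxx => /esym/eqP.
Qed.

Definition fill_tail (x : Y n) N : Y n := fun i k m =>
  if [&& (val i < N)%N, (k < N)%N & (m < N)%N] then x i k m else tail_pattern N k m.

Lemma fill_tail_col (x : Y n) N i k m : (N <= m)%N -> fill_tail x N i k m = tail_pattern N k m.
Proof. by move=> Nm; rewrite /fill_tail (ltnNge m) Nm !andbF. Qed.

Lemma fill_tail_row (x : Y n) N i k m : (N <= k)%N -> fill_tail x N i k m = tail_pattern N k m.
Proof. by move=> Nk; rewrite /fill_tail (ltnNge k) Nk andbF. Qed.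

Lemma fill_tail_row_inj (x : Y n) N i : injective (fill_tail x N i).
Proof.
move=> k l E; apply: (@tail_pattern_inj N) => m Nm.
by rewrite -!(fill_tail_col x i _ Nm) E.
Qed.

Lemma Xn_fill_tail (x : Y n) N : Xn n (fill_tail x N).
Proof.
move=> i _ Hi; rewrite !(extE _ Hi); split.
- move=> m; have [mN|Nm] := ltnP m N.
    by exists N; rewrite fill_tail_row // /tail_pattern ltnn mN.
  by exists m; rewrite fill_tail_col // /tail_pattern ltnNge Nm eqxx orbT.
- move=> k; have [kN|Nk] := ltnP k N.
    by exists (N + 2 * k)%N; rewrite fill_tail_col ?leq_addr // /tail_pattern kN eqxx.
  by exists k; rewrite fill_tail_col // /tail_pattern ltnNge Nk eqxx orbT.
- move=> k l1 l2; have Hi' : ltn_e i.-1 n by apply: ltn_e_le Hi; apply: leq_pred.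
  by rewrite (extE _ Hi') => /fill_tail_row_inj ->.
Qed.

Lemma popen_setT : popen (@setT (Y n)).
Proof. by move=> x _; exists 0%N. Qed.

Definition row_collision i k l : set (Y n) :=
  [set x | [/\ ltn_e i n, k != l & ext x i k = ext x i l]].

Lemma rel_closure_row_collision (X : set (Y n)) i k l :
  rel_closure X (row_collision i k l) `<=` row_collision i k l.
Proof.
move=> z [_ cl]; have [_ [_ [Hi kl _] _]] := cl setT popen_setT I.
split=> //; apply/funext => m; rewrite !(extE _ Hi).
pose W := [set y : Y n | y (exist _ i Hi) k m = z (exist _ i Hi) k m /\
                         y (exist _ i Hi) l m = z (exist _ i Hi) l m].
have openW : popen W.
  move=> y [yk yl]; exists (maxn i (maxn k (maxn l m))).+1 => y' y'y.
  by split; rewrite y'y //= ?yk ?yl //; lia.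
have [y [_ [_ _ E] [<- <-]]] := cl W openW (conj erefl erefl).
by rewrite -!(extE _ Hi) E.
Qed.

Lemma nowhere_dense_row_collision i k l : nowhere_dense_in (Xn n) (row_collision i k l).
Proof.
move=> _ [V [openV ->]] sub; apply/seteqP; split=> // x [Vx _].
have [N agree] := openV x Vx.
have Vz : V (fill_tail x N) by apply: agree => i' k' m' iN kN mN; rewrite /fill_tail iN kN mN.
have [Hi kl] := rel_closure_row_collision (sub _ (conj Vz (Xn_fill_tail x N))).
rewrite (extE _ Hi) => /fill_tail_row_inj kl'.
by move: kl; rewrite kl' eqxx.
Qed.

Lemma elt_inj_of_rows (x : Y n) :
  (forall i, ltn_e i n -> injective (ext x i)) -> forall j, ltn_e j n -> injective (elt x j).
Proof.
move=> rows_inj; elim=> [|j IH] Hj a b E; first exact: (rows_inj 0%N Hj a b E).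
have injj := IH (ltn_e_le (leqnSn j) Hj).
apply: (rows_inj j.+1 Hj); apply/funext => k.
exact: (ext_succ_transport injj injj E erefl).
Qed.

Lemma comeager_Xinj : comeager_in (Xn n) (Xinj n).
Proof.
split; first by move=> x [].
pose F p := if unpickle p is Some (i, (k, l)) then row_collision i k l else row_collision 0 0 0.
exists F; split.
  by move=> p; rewrite /F; case: (unpickle p) => [[i [k l]]|]; exact: nowhere_dense_row_collision.
move=> x [Xx notXinj]; apply: contrapT => noF; apply: notXinj; split=> //.
apply: elt_inj_of_rows => i Hi k l E; have [//|kl] := eqVneq k l.
by case: noF; exists (pickle (i, (k, l))); rewrite // /F pickleK.
Qed.

End Comeager.

Lemma Frel_act (n : enat) (g : Idx n -> sinf) (x : Y n) : one_le n -> Frel x (act g x).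
Proof.
case: n g x => [m|] g x /= m_ge1; last by move=> j; rewrite Aset_act.
by rewrite Aset_act //=; lia.
Qed.

Lemma Frel_Aset (n : enat) (x y : Y n) : one_le n -> Xn n x -> Xn n y -> Frel x y ->
  forall j, ltn_e j n -> Aset x j = Aset y j.
Proof.
case: n x y => [m|] x y /= m_ge1 Xx Xy E j Hj; last exact: E.
have down d : forall j, (j + d = m.-1)%N -> Aset x j = Aset y j.
  elim: d => [|d IH] i id; first by move: id; rewrite addn0 => ->.
  have Hs : ltn_e i.+1 (Fin m) by rewrite /=; lia.
  by rewrite (Aset_bigcup Xx Hs) (Aset_bigcup Xy Hs) (IH i.+1) //; lia.
by apply: (down (m.-1 - j)%N); lia.
Qed.

Lemma orbit_of_Frel (n : enat) (x y : Y n) : one_le n -> Xinj n x -> Xinj n y ->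
  Frel x y -> exists g : Idx n -> sinf, act g x = y.
Proof.
move=> hn [Xx injx] [Xy injy] xy.
have match_level (i : Idx n) : exists s : sinf, forall l, elt y (val i) (pf s l) = elt x (val i) l.
  exact: perm_of_range_eq (injx _ (valP i)) (injy _ (valP i)) (Frel_Aset hn Xx Xy xy (valP i)).
have [g gxy] := choice match_level.
by exists g; apply: act_eq_of_elt gxy.
Qed.

Theorem mainTheorem4 (n : enat) (hn : one_le n) :
  (comeager_in (Xn n) (Xinj n) /\
   (forall (g : Idx n -> sinf) (x : Y n), Xinj n x -> Xinj n (act g x))) /\
  (forall x y : Y n, Xinj n x -> Xinj n y ->
     ((exists g : Idx n -> sinf, act g x = y) <-> Frel x y)).
Proof.
split; first by split; [exact: comeager_Xinj | exact: Xinj_act].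
move=> x y Xx Xy; split; last exact: orbit_of_Frel.
by case=> g <-; exact: Frel_act.
Qed.
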